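(* For integers $m\ge2$ and $p\ge0$, \[ \sum_{t=0}^{m-2}\binom{m-1}{t}a_{m-t,\,p+t}=(m-1)^{m+p-1}. \]
   Context: For integers $m\ge2$ and $p\ge0$, define \[ a_{m,p}:=\sum_{\substack{k_2,\dots,k_m\ge0\\ k_2+\cdots+k_m=p}}\frac{(k_2+\cdots+k_m+m-1)!}{(k_2+1)!\cdots(k_m+1)!} \] (a sum over $(m-1)$-tuples of nonnegative integers $(k_2,\dots,k_m)$). *)

From mathcomp Require Import all_boot all_order all_algebra.
Set Implicit Arguments. Unset Strict Implicit. Unset Printing Implicit Defensive.
Import Order.TTheory GRing.Theory Num.Theory.
Local Open Scope ring_scope.

(* The tuple is indexed by 'I_(m-1); each k_i <= p is forced by the sum
   condition, so ranging over 'I_p.+1 loses nothing. *)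
Definition a_mp (m p : nat) : rat :=
  \sum_(k : {ffun 'I_(m.-1) -> 'I_p.+1} | (\sum_(i < m.-1) (k i : nat))%N == p)
    ((\sum_(i < m.-1) (k i : nat) + m - 1)`!)%N%:R
      / \prod_(i < m.-1) (((k i : nat).+1)`!)%:R.

From mathcomp Require Import all_boot all_order all_algebra.
Import Order.TTheory GRing.Theory Num.Theory.
Local Open Scope ring_scope.

(* Proof by exponential generating functions, with truncated polynomials in
   place of power series.  Write E(x) = sum_j x^j/(j+1)! = (e^x - 1)/x.
   Expanding E(x)^(m-1) as a product shows a_{m,p} = (m+p-1)! [x^p] E(x)^(m-1).
   With n = m-1 and N = n+p, the t-th summand of the theorem is therefore
   C(n,t) N! [x^(p+t)] E^(n-t) = C(n,t) N! [x^N] (e^x - 1)^(n-t), and by the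
   binomial theorem the whole sum is N! [x^N] ((e^x - 1 + 1)^n - 1), the
   missing term t = n being the constant 1, which does not contribute as N > 0.
   Since [x^N] e^(nx) = n^N/N!, the sum equals n^N. *)

Lemma coef_poly_pow (R : comNzRingType) (c : nat -> R) (r b q : nat) :
  ((\poly_(j < b) c j) ^+ r)`_q =
  \sum_(f : {ffun 'I_r -> 'I_b} | (\sum_(i < r) (f i : nat))%N == q)
    \prod_(i < r) c (f i).
Proof.
rewrite poly_def -{1}(card_ord r) -prodr_const.
rewrite (bigA_distr_bigA (fun (i : 'I_r) (j : 'I_b) => c j *: 'X^j)).
rewrite coef_sum [RHS]big_mkcond /=; apply: eq_bigr => f _.
have -> : \prod_(i < r) (c (f i) *: 'X^(f i)) =
          (\prod_(i < r) c (f i))%:P * 'X^(\sum_(i < r) (f i : nat)).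
  rewrite -prodrXr rmorph_prod -big_split /=.
  by apply: eq_bigr => i _; rewrite mul_polyC.
by rewrite coefCM coefXn eq_sym; case: eqP => _; rewrite ?mulr1 ?mulr0.
Qed.

Section LowOrderCoefficients.
Variable R : nzSemiRingType.

Definition agree_upto (q : nat) (A B : {poly R}) : Prop :=
  forall i, (i <= q)%N -> A`_i = B`_i.

Lemma agree_uptoM q (A B C D : {poly R}) :
  agree_upto q A B -> agree_upto q C D -> agree_upto q (A * C) (B * D).
Proof.
move=> eqAB eqCD i le_iq; rewrite !coefM; apply: eq_bigr => -[j /= lt_ji] _.
have le_jq : (j <= q)%N by rewrite (leq_trans _ le_iq) // -ltnS.
by rewrite eqAB ?eqCD // (leq_trans (leq_subr _ _) le_iq).
Qed.

Lemma agree_uptoX q r (A B : {poly R}) :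
  agree_upto q A B -> agree_upto q (A ^+ r) (B ^+ r).
Proof.
move=> eqAB; elim: r => [|r IHr]; first by rewrite !expr0.
by rewrite !exprS; apply: agree_uptoM.
Qed.

End LowOrderCoefficients.

Definition exp_trunc (b : nat) : {poly rat} := \poly_(j < b) ((j`!)%:R)^-1.
Definition expm1_div_trunc (b : nat) : {poly rat} :=
  \poly_(j < b) (((j.+1)`!)%:R)^-1.

Lemma a_mp_coef (r q : nat) :
  a_mp r.+1 q = ((q + r)`!)%:R * (expm1_div_trunc q.+1 ^+ r)`_q.
Proof.
rewrite /a_mp /expm1_div_trunc coef_poly_pow mulr_sumr.
apply: eq_bigr => k /eqP sum_k.
by rewrite sum_k addnS subn1 /= prodfV.
Qed.

Lemma coef_expm1_div_trunc_pow (r q b b' : nat) :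
  (q < b)%N -> (q < b')%N ->
  (expm1_div_trunc b ^+ r)`_q = (expm1_div_trunc b' ^+ r)`_q.
Proof.
move=> lt_qb lt_qb'; apply: (@agree_uptoX _ q) => // i le_iq.
by rewrite !coef_poly (leq_ltn_trans le_iq lt_qb) (leq_ltn_trans le_iq lt_qb').
Qed.

Lemma mulX_expm1_div_trunc (b : nat) :
  'X * expm1_div_trunc b = exp_trunc b.+1 - 1.
Proof.
apply/polyP => -[|i]; rewrite coefXM coefB coef1 !coef_poly /=.
  by rewrite fact0 invr1 subrr.
by rewrite ltnS subr0.
Qed.

Lemma coef_exp_trunc_pow (b n j : nat) : (j <= b)%N ->
  (exp_trunc b.+1 ^+ n)`_j = (n ^ j)%:R / (j`!)%:R.
Proof.
elim: n j => [|n IHn] j le_jb.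
  rewrite expr0 coef1; case: j le_jb => [|j] _; first by rewrite fact0 invr1 mulr1.
  by rewrite exp0n // mul0r.
rewrite exprSr coefM -[n.+1]add1n expnDn natr_sum mulr_suml.
apply: eq_bigr => -[i /=] lt_ij _; have le_ij : (i <= j)%N by rewrite -ltnS.
rewrite IHn ?(leq_trans le_ij) // coef_poly ltnS (leq_trans (leq_subr _ _) le_jb).
rewrite exp1n mul1n -(bin_fact le_ij) !natrM !invfM.
have binN0 : ('C(j, i))%:R != 0 :> rat by rewrite pnatr_eq0 -lt0n bin_gt0.
by rewrite [_%:R * (n ^ i)%:R]mulrC -!mulrA mulVKf.
Qed.

Lemma a_mp_as_coef (n p t : nat) : (t < n)%N ->
  a_mp (n.+1 - t) (p + t) =
  ((n + p)`!)%:R * ((exp_trunc (n + p).+2 - 1) ^+ (n - t))`_(n + p).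
Proof.
move=> lt_tn; have le_tn := ltnW lt_tn.
rewrite subSn // a_mp_coef.
have -> : (p + t + (n - t) = n + p)%N by rewrite -addnA subnKC // addnC.
congr (_ * _).
have le_pt_np : (p + t <= n + p)%N by rewrite addnC leq_add2r.
rewrite (@coef_expm1_div_trunc_pow _ _ _ (n + p).+1) ?ltnS //.
rewrite -mulX_expm1_div_trunc exprMn coefXnM.
have le_nt_np : (n - t <= n + p)%N by rewrite (leq_trans (leq_subr _ _)) ?leq_addr.
by rewrite ltnNge le_nt_np /= subnBA // -addnA addnC addKn addnC.
Qed.

(* Binomial theorem for e^(nx) = ((e^x - 1) + 1)^n, read at a degree N > 0
   where the term of the constant 1 vanishes. *)
Lemma binomial_sum_coef (n N : nat) : (0 < N)%N ->
  \sum_(t < n) ('C(n, t))%:R * ((exp_trunc N.+2 - 1) ^+ (n - t))`_N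
  = (n ^ N)%:R / (N`!)%:R.
Proof.
move=> N_gt0; rewrite -(@coef_exp_trunc_pow N.+1 n N (leqnSn N)).
have -> : exp_trunc N.+2 ^+ n = (exp_trunc N.+2 - 1 + 1) ^+ n by rewrite subrK.
rewrite exprD1n coef_sum big_ord_recl /=.
rewrite expr0 coefMn coef1 gtn_eqF // mul0rn add0r.
rewrite (reindex_inj rev_ord_inj); apply: eq_bigr => t _ /=.
by rewrite coefMn mulr_natl /bump leq0n /= add1n bin_sub // subKn.
Qed.

Theorem proposition3 (m p : nat) (hm : (2 <= m)%N) :
  \sum_(t < m.-1) ('C(m.-1, t))%:R * a_mp (m - t) (p + t)
  = ((m.-1) ^ (m + p - 1))%:R :> rat.
Proof.
case: m hm => [|n] //; rewrite ltnS => n_gt0 /=.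
under eq_bigr => t _ do rewrite a_mp_as_coef // mulrCA.
rewrite -mulr_sumr binomial_sum_coef ?addn_gt0 ?n_gt0 //.
by rewrite addSn subn1 /= mulrC divfK // pnatr_eq0 -lt0n fact_gt0.
Qed.
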